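(* Let $l_n,R_n>0$ ($n\in\mathbb N$) satisfy $l_n,R_n\to\infty$, $l_n^2/n\to0$, $n/R_n\to0$, $e^{-\pi l_n/2}R_n\to0$, and let $W_n(z)=\exp\!\big(-l_n\pi-il_n\log\frac{z-n}{z+n}\big)$ for $z\in\mathbb C_+$. Then for all sufficiently large $n$, $$|W_n(z)|<e^{-\pi l_n/2}\quad\text{for all } z\in\mathbb C_+ \text{ with } |z|=R_n.$$
   Context: $\mathbb C_+=\{\operatorname{Im}z>0\}$. For $z\in\mathbb C_+$ one has $\frac{z-n}{z+n}\in\mathbb C_+$, and $\log$ denotes the branch with imaginary part in $(0,\pi)$. *)

From Stdlib Require Import Reals.
From Coquelicot Require Import Coquelicot.
Open Scope R_scope.

Definition Cexp (z : C) : C :=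
  (exp (Re z) * cos (Im z), exp (Re z) * sin (Im z)).

(** Branch of log on the upper half plane with imaginary part in (0, pi):
    log w = ln |w| + i arg w, arg w = acos (Re w / |w|) in (0,pi) when Im w > 0. *)
Definition Clog_up (w : C) : C :=
  (ln (Cmod w), acos (Re w / Cmod w)).

Definition W (l : nat -> R) (n : nat) (z : C) : C :=
  Cexp (Cminus (RtoC (- l n * PI))
               (Cmult (Cmult Ci (RtoC (l n)))
                      (Clog_up (Cdiv (Cminus z (RtoC (INR n)))
                                     (Cplus z (RtoC (INR n))))))).

(** With [w = (z-n)/(z+n)] one has [|W_n(z)| = exp (-l_n pi + l_n arg w)].
    For [|z| > n] the Möbius image [w] lies in the right half plane, since
    [Re w = (|z|^2 - n^2) / |z+n|^2], so [arg w < pi/2] and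
    [|W_n(z)| < exp (-pi l_n / 2)]. *)

From Stdlib Require Import Reals Lra Psatz.
From Coquelicot Require Import Coquelicot.
Open Scope R_scope.

Lemma Cmod_Cexp (z : C) : Cmod (Cexp z) = exp (Re z).
Proof.
  unfold Cmod, Cexp; cbn [fst snd].
  replace ((exp (Re z) * cos (Im z)) ^ 2 + (exp (Re z) * sin (Im z)) ^ 2)
    with (exp (Re z) ^ 2 * (sin (Im z) ^ 2 + cos (Im z) ^ 2)) by ring.
  rewrite <- !Rsqr_pow2, sin2_cos2, Rmult_1_r, Rsqr_pow2.
  apply sqrt_pow2, Rlt_le, exp_pos.
Qed.

Lemma Re_sub_mul_Ci (a b : R) (u : C) :
  Re (Cminus (RtoC a) (Cmult (Cmult Ci (RtoC b)) u)) = a + b * Im u.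
Proof. destruct u as [x y]; cbn; ring. Qed.

Lemma Im_Clog_up_lt_PI2 (w : C) : 0 < Re w -> Im (Clog_up w) < PI / 2.
Proof.
  intros Hw; cbn [Clog_up Im snd].
  assert (Hmod : 0 < Cmod w).
  { apply Rlt_le_trans with (Rabs (Re w)); [apply Rabs_pos_lt; lra | apply re_le_Cmod]. }
  rewrite acos_atan by (apply Rdiv_lt_0_compat; assumption).
  apply atan_bound.
Qed.

Lemma Re_Mobius_pos (z : C) (t : R) :
  Rabs t < Cmod z -> 0 < Re (Cdiv (Cminus z (RtoC t)) (Cplus z (RtoC t))).
Proof.
  intros Ht.
  assert (Hsq : t ^ 2 < Re z ^ 2 + Im z ^ 2).
  { rewrite <- Cmod2_alt, <- (pow2_abs t).
    pose proof (Rabs_pos t); nra. }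
  destruct z as [x y]; cbn -[pow] in *.
  assert (Hd : 0 < (x + t) ^ 2 + y ^ 2) by nra.
  match goal with |- 0 < ?e => replace e with ((x ^ 2 + y ^ 2 - t ^ 2) / ((x + t) ^ 2 + y ^ 2)) end.
  - apply Rdiv_lt_0_compat; lra.
  - field; lra.
Qed.

Lemma is_lim_seq_div_0_eventually_lt (u v : nat -> R) :
  (forall n, 0 < v n) -> is_lim_seq (fun n => u n / v n) 0 ->
  exists N, forall n, (N <= n)%nat -> u n < v n.
Proof.
  intros Hv Hlim.
  apply is_lim_seq_spec in Hlim.
  destruct (Hlim (mkposreal 1 Rlt_0_1)) as [N HN].
  exists N; intros n Hn.
  specialize (HN n Hn); cbn in HN.
  rewrite Rminus_0_r in HN.
  apply Rabs_def2 in HN.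
  pose proof (Hv n).
  apply (Rmult_lt_reg_r (/ v n)); [apply Rinv_0_lt_compat; lra|].
  rewrite Rinv_r by lra; lra.
Qed.

Theorem lemma4 (l Rn : nat -> R)
  (hl : forall n, 0 < l n) (hR : forall n, 0 < Rn n)
  (hl_inf : is_lim_seq l p_infty) (hR_inf : is_lim_seq Rn p_infty)
  (hl2 : is_lim_seq (fun n => (l n) ^ 2 / INR n) 0)
  (hnR : is_lim_seq (fun n => INR n / Rn n) 0)
  (hexp : is_lim_seq (fun n => exp (- PI * l n / 2) * Rn n) 0) :
  exists N : nat, forall n : nat, (N <= n)%nat ->
    forall z : C, 0 < Im z -> Cmod z = Rn n ->
      Cmod (W l n z) < exp (- PI * l n / 2).
Proof.
  destruct (is_lim_seq_div_0_eventually_lt _ _ hR hnR) as [N HN].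
  exists N; intros n Hn z _ Hz.
  assert (Harg : Im (Clog_up (Cdiv (Cminus z (RtoC (INR n))) (Cplus z (RtoC (INR n)))))
                 < PI / 2).
  { apply Im_Clog_up_lt_PI2, Re_Mobius_pos.
    rewrite Rabs_pos_eq, Hz by apply pos_INR.
    exact (HN n Hn). }
  unfold W; rewrite Cmod_Cexp, Re_sub_mul_Ci.
  apply exp_increasing.
  pose proof (hl n); nra.
Qed.
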